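(* Let $p$ be a prime and $M=\mathbb Z_{p^2}^2$, so $\mathrm{GL}(M)=\mathrm{GL}(2,\mathbb Z_{p^2})$. (i) Let $f=X-a$, $a\in\mathbb Z_p^\times$. Every element of $\mathrm{GL}(M)_f^{(1,1)}$ is conjugate in $\mathrm{GL}(2,\mathbb Z_{p^2})$ to exactly one of the following, where $b$ is an integer with $0<b<p$, $b\equiv a\pmod p$: (i.1) $bI+p\begin{bmatrix}\alpha&0\\0&\delta\end{bmatrix}$ with integers $0\le\alpha\le\delta<p$; (i.2) $bI+p\begin{bmatrix}\alpha&1\\0&\alpha\end{bmatrix}$ with $\alpha\in\mathbb Z_p$; (i.3) $bI+p\begin{bmatrix}0&1\\-b_0&-b_1\end{bmatrix}$ with $X^2+b_1X+b_0\in\mathbb Z_p[X]$ irreducible. (ii) Let $f=X-a$, $a\in\mathbb Z_p^\times$. Every element of $\mathrm{GL}(M)_f^{(2)}$ is conjugate in $\mathrm{GL}(2,\mathbb Z_{p^2})$ to exactly one matrix $\begin{bmatrix}b&1\\0&b\end{bmatrix}+p\begin{bmatrix}\alpha&0\\ \gamma&0\end{bmatrix}$, with $b$ an integer, $0<b<p$, $b\equiv a\pmod p$, and $\alpha,\gamma\in\mathbb Z_p$. (iii) Let $f=X^2+a_1X+a_0\in\mathbb Z_p[X]$ be irreducible. Every element of $\mathrm{GL}(M)_f$ is conjugate in $\mathrm{GL}(2,\mathbb Z_{p^2})$ to exactly one matrix $\begin{bmatrix}0&1\\-b_0&-b_1\end{bmatrix}+p\begin{bmatrix}\alpha&\beta\\0&0\end{bmatrix}$,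 where $b_0,b_1$ are the integers with $0\le b_0,b_1<p$, $b_0\equiv a_0$, $b_1\equiv a_1\pmod p$, and $\alpha,\beta\in\mathbb Z_p$.
   Context: $\mathbb Z_m=\mathbb Z/m\mathbb Z$. For $x=c+p\mathbb Z\in\mathbb Z_p$, $px$ denotes the element $pc+p^2\mathbb Z$ of $\mathbb Z_{p^2}$; integers are regarded as elements of $\mathbb Z_{p^2}$ by reduction. For $A\in\mathrm{GL}(2,\mathbb Z_{p^2})$, $\overline A\in\mathrm{GL}(2,\mathbb Z_p)$ is its entrywise reduction mod $p$. For monic irreducible $f\in\mathbb Z_p[X]$, $f\neq X$: $\mathrm{GL}(M)_f$ is the set of $A$ such that the minimal polynomial of $\overline A$ is a power of $f$. For $f=X-a$: $\mathrm{GL}(M)_f^{(1,1)}$ is the set of $A$ such that $\overline A$ has elementary divisors $f,f$ (i.e. $\overline A=aI$), and $\mathrm{GL}(M)_f^{(2)}$ is the set of $A$ such that $\overline A$ has the single elementary divisor $f^2$. Conjugacy classes correspond to isomorphism classes of $\Lambda$-modules ($\Lambda=\mathbb Z[t,t^{-1}]$) with underlying group $\mathbb Z_{p^2}^2$ and $t$ acting by the matrix. *)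

From HB Require Import structures.
From mathcomp Require Import all_boot all_order all_algebra.
Set Implicit Arguments. Unset Strict Implicit. Unset Printing Implicit Defensive.
Import GRing.Theory.
Local Open Scope ring_scope.

(* Z_p is rendered as 'F_p (p prime), Z_{p^2} as 'Z_(p ^ 2). *)

(* p x for x in Z_p : the element p*c + p^2 Z of Z_{p^2} *)
Definition pmul (p : nat) (x : 'F_p) : 'Z_(p ^ 2) := (p * nat_of_ord x)%N%:R.

Definition redmx (p : nat) (A : 'M['Z_(p ^ 2)]_2) : 'M['F_p]_2 :=
  map_mx (fun x : 'Z_(p ^ 2) => (nat_of_ord x)%:R) A.

Definition mx2 (R : Type) (a b c d : R) : 'M[R]_2 :=
  \matrix_(i < 2, j < 2)
    if i == ord0 then (if j == ord0 then a else b) else (if j == ord0 then c else d).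

Definition GLconj (p : nat) (A B : 'M['Z_(p ^ 2)]_2) : Prop :=
  exists P : 'M['Z_(p ^ 2)]_2, P \in unitmx /\ B = invmx P *m A *m P.

(* GL(M)_f^{(1,1)} for f = X - a : reduction is a I *)
Definition GL_f11 (p : nat) (a : 'F_p) (A : 'M['Z_(p ^ 2)]_2) : Prop :=
  A \in unitmx /\ redmx A = a%:M.

(* GL(M)_f^{(2)} for f = X - a : reduction has single elementary divisor f^2,
   i.e. its minimal polynomial is (X - a)^2 *)
Definition GL_f2 (p : nat) (a : 'F_p) (A : 'M['Z_(p ^ 2)]_2) : Prop :=
  A \in unitmx /\ mxminpoly (redmx A) = ('X - a%:P) ^+ 2.

(* GL(M)_f : minimal polynomial of the reduction is a power of f *)
Definition GL_f (p : nat) (f : {poly 'F_p}) (A : 'M['Z_(p ^ 2)]_2) : Prop :=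
  A \in unitmx /\ exists k : nat, mxminpoly (redmx A) = f ^+ k.

Definition NF_i (p b : nat) (N : 'M['Z_(p ^ 2)]_2) : Prop :=
  (exists al de : nat, (al <= de)%N /\ (de < p)%N /\
     N = (b%:R)%:M + mx2 (p * al)%N%:R 0 0 (p * de)%N%:R)
  \/ (exists al : 'F_p, N = (b%:R)%:M + mx2 (pmul al) (pmul 1) 0 (pmul al))
  \/ (exists b0 b1 : 'F_p,
        irreducible_poly ('X^2 + b1%:P * 'X + b0%:P) /\
        N = (b%:R)%:M + mx2 0 (pmul 1) (pmul (- b0)) (pmul (- b1))).

Definition NF_ii (p b : nat) (N : 'M['Z_(p ^ 2)]_2) : Prop :=
  exists al ga : 'F_p,
    N = mx2 b%:R 1 0 b%:R + mx2 (pmul al) 0 (pmul ga) 0.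

Definition NF_iii (p b0 b1 : nat) (N : 'M['Z_(p ^ 2)]_2) : Prop :=
  exists al be : 'F_p,
    N = mx2 0 1 (- b0%:R) (- b1%:R) + mx2 (pmul al) (pmul be) 0 0.

From HB Require Import structures.
From mathcomp Require Import all_boot all_order all_algebra.
From mathcomp Require Import ring zify.
Set Implicit Arguments. Unset Strict Implicit. Unset Printing Implicit Defensive.
Import GRing.Theory.
Local Open Scope ring_scope.

(* The whole argument rests on one elementary criterion: over a commutative
   ring, a 2x2 matrix for which one of e1, e2, e1 + e2 is a cyclic vector
   (the determinant of (v, Av) is a unit) is similar to its companion matrix,
   so two such matrices are similar iff they have the same trace and
   determinant.  Conversely trace and determinant are always similarity
   invariants.
   - Parts (ii) and (iii): the reduction mod p is not scalar, so the matrix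
     and each candidate normal form have a cyclic vector; the normal form is
     then pinned down by matching trace and determinant modulo p^2, which
     fixes alpha and gamma (resp. alpha and beta) uniquely.
   - Part (i): A = bI + pB, and bI + pB ~ bI + pC over Z_{p^2} iff B ~ C
     over Z_p.  So (i) reduces to the classification of 2x2 matrices over
     the field Z_p: diagonal (entries ordered as integers), a Jordan block,
     or the companion matrix of an irreducible quadratic. *)

Lemma ord2_cases (i : 'I_2) : i = 0 \/ i = 1.
Proof. case: i => [[|[|k]] Hi]; [left|right|]; try by apply: val_inj. by []. Qed.

Lemma mx2E (R : Type) (A : 'M[R]_2) : A = mx2 (A 0 0) (A 0 1) (A 1 0) (A 1 1).
Proof.
apply/matrixP => i j; rewrite mxE.
by case: (ord2_cases i) => ->; case: (ord2_cases j) => ->.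
Qed.

Lemma mx2_inj (R : Type) (a b c d a' b' c' d' : R) :
  mx2 a b c d = mx2 a' b' c' d' -> [/\ a = a', b = b', c = c' & d = d'].
Proof.
move=> e; have entry i j : mx2 a b c d i j = mx2 a' b' c' d' i j by rewrite e.
by move: (entry 0 0) (entry 0 1) (entry 1 0) (entry 1 1); rewrite !mxE.
Qed.

Lemma mx2_mul (R : pzRingType) (a b c d e f g h : R) :
  mx2 a b c d *m mx2 e f g h = mx2 (a*e + b*g) (a*f + b*h) (c*e + d*g) (c*f + d*h).
Proof.
apply/matrixP => i j; rewrite !mxE !big_ord_recl big_ord0 !mxE.
by case: (ord2_cases i) => ->; case: (ord2_cases j) => ->; rewrite /= ?mxE /= ?addr0.
Qed.

Lemma mx2_add (R : nmodType) (a b c d e f g h : R) :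
  mx2 a b c d + mx2 e f g h = mx2 (a + e) (b + f) (c + g) (d + h).
Proof.
apply/matrixP => i j; rewrite !mxE.
by case: (ord2_cases i) => ->; case: (ord2_cases j) => ->.
Qed.

Lemma mx2_scalar (R : pzRingType) (a : R) : a%:M = mx2 a 0 0 a.
Proof.
apply/matrixP => i j; rewrite !mxE.
by case: (ord2_cases i) => ->; case: (ord2_cases j) => ->.
Qed.

Lemma mx2_map (R S : Type) (f : R -> S) (a b c d : R) :
  map_mx f (mx2 a b c d) = mx2 (f a) (f b) (f c) (f d).
Proof.
apply/matrixP => i j; rewrite !mxE.
by case: (ord2_cases i) => ->; case: (ord2_cases j) => ->.
Qed.

Lemma mx2_det (R : comPzRingType) (a b c d : R) : \det (mx2 a b c d) = a * d - b * c.
Proof.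
rewrite (expand_det_row _ 0) !big_ord_recl big_ord0 /cofactor !det_mx11 /=.
rewrite !mxE /= expr0 expr1; ring.
Qed.

Lemma mx2_tr (R : pzRingType) (a b c d : R) : \tr (mx2 a b c d) = a + d.
Proof. by rewrite /mxtrace !big_ord_recl big_ord0 !mxE /= addr0. Qed.

Definition similar (R : comUnitRingType) n (A B : 'M[R]_n) : Prop :=
  exists P : 'M[R]_n, P \in unitmx /\ A *m P = P *m B.

Section Similarity.
Variables (R : comUnitRingType) (n : nat).
Implicit Types A B C : 'M[R]_n.

Lemma similar_refl A : similar A A.
Proof. exists 1%:M; split; [exact: unitmx1|by rewrite mulmx1 mul1mx]. Qed.

Lemma similar_sym A B : similar A B -> similar B A.
Proof.
move=> [P [uP e]]; exists (invmx P); split; first by rewrite unitmx_inv.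
have -> : B = invmx P *m (A *m P) by rewrite e mulKmx.
by rewrite -mulmxA -mulmxA mulmxV // mulmx1.
Qed.

Lemma similar_trans A B C : similar A B -> similar B C -> similar A C.
Proof.
move=> [P [uP e]] [Q [uQ f]]; exists (P *m Q); split; first by rewrite unitmx_mul uP.
by rewrite mulmxA e -mulmxA f mulmxA.
Qed.

Lemma similar_tr_det A B : similar A B -> \tr A = \tr B /\ \det A = \det B.
Proof.
move=> [P [uP e]]; have eB : B = invmx P *m (A *m P) by rewrite e mulKmx.
split; first by rewrite eB mxtrace_mulC -mulmxA mulmxV // mulmx1.
have : \det P * \det A = \det P * \det B by rewrite -!det_mulmx -e !det_mulmx mulrC.
by move: uP; rewrite unitmxE => uP; apply: mulrI.
Qed.

Lemma similar_shift (s : R) A B : similar A B -> similar (s%:M + A) (s%:M + B).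
Proof.
move=> [P [uP e]]; exists P; split => //.
by rewrite mulmxDl mulmxDr e mul_scalar_mx mul_mx_scalar.
Qed.

Lemma similar_unshift (s : R) A B : similar (s%:M + A) (s%:M + B) -> similar A B.
Proof.
move=> /(similar_shift (- s)).
by rewrite !addrA -!raddfD /= addNr !raddf0 ?add0r.
Qed.

Lemma similar_scalar (c : R) B : similar c%:M B -> B = c%:M.
Proof.
move=> [P [uP e]]; have -> : B = invmx P *m (P *m B) by rewrite mulKmx.
by rewrite -e -scalar_mxC mulKmx.
Qed.

End Similarity.

Lemma GLconjE (p : nat) (A B : 'M['Z_(p ^ 2)]_2) : GLconj A B <-> similar A B.
Proof.
split=> [[P [uP ->]]|[P [uP e]]]; exists P; split => //.
  by rewrite -!mulmxA mulKVmx.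
by rewrite -mulmxA e mulmxA mulVmx // mul1mx.
Qed.

(* [[a, b], [c, d]] has one of e1, e2, e1 + e2 as a cyclic vector. *)
Definition cyclic2 (R : comUnitRingType) (a b c d : R) : Prop :=
  [\/ c \is a GRing.unit, b \is a GRing.unit | (c + d - a - b) \is a GRing.unit].

Section CyclicCriterion.
Variable R : comUnitRingType.

(* With a cyclic vector v, the basis (v, Av) conjugates to the companion matrix. *)
Lemma similar_companion (a b c d : R) : cyclic2 a b c d ->
  similar (mx2 a b c d) (mx2 0 (- (a * d - b * c)) 1 (a + d)).
Proof.
have basis v0 v1 : v0 * (c * v0 + d * v1) - (a * v0 + b * v1) * v1 \is a GRing.unit ->
    similar (mx2 a b c d) (mx2 0 (- (a * d - b * c)) 1 (a + d)).
  move=> u; exists (mx2 v0 (a * v0 + b * v1) v1 (c * v0 + d * v1)); split.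
    by rewrite unitmxE mx2_det.
  rewrite !mx2_mul; congr mx2; ring.
case=> u.
- by apply: (basis 1 0); rewrite (_ : _ - _ = c) //; ring.
- by apply: (basis 0 1); rewrite (_ : _ - _ = - b) ?unitrN //; ring.
- by apply: (basis 1 1); rewrite (_ : _ - _ = c + d - a - b) //; ring.
Qed.

Lemma similar_of_tr_det (a b c d a' b' c' d' : R) :
  cyclic2 a b c d -> cyclic2 a' b' c' d' ->
  a + d = a' + d' -> a * d - b * c = a' * d' - b' * c' ->
  similar (mx2 a b c d) (mx2 a' b' c' d').
Proof.
move=> u u' e1 e2; apply: similar_trans (similar_companion u) _.
by rewrite e1 e2; apply: similar_sym; apply: similar_companion.
Qed.

Lemma similar_mx2_tr_det (a b c d a' b' c' d' : R) :
  similar (mx2 a b c d) (mx2 a' b' c' d') ->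
  a + d = a' + d' /\ a * d - b * c = a' * d' - b' * c'.
Proof. by move/similar_tr_det; rewrite !mx2_tr !mx2_det. Qed.

(* Proving u = v from u - v = e - f and e = f lets [ring] do the rewriting. *)
Lemma eq_of_sub_eq (u v e f : R) : e = f -> u - v = e - f -> u = v.
Proof. by move=> -> h; apply/eqP; rewrite -subr_eq0 h subrr. Qed.

End CyclicCriterion.

Section FieldFacts.
Variable F : fieldType.

Definition nonscalar2 (a b c d : F) : Prop := ~ [/\ c = 0, b = 0 & a = d].

Lemma nonscalar_cyclic2 (a b c d : F) : nonscalar2 a b c d -> cyclic2 a b c d.
Proof.
move=> h; rewrite /cyclic2 !unitfE.
have [c0|] := eqVneq c 0; last by constructor 1.
have [b0|] := eqVneq b 0; last by constructor 2.
constructor 3; rewrite c0 b0 add0r subr0 subr_eq0; apply/eqP => e; exact: h.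
Qed.

Lemma quad_size (c1 c0 : F) : size ('X^2 + c1%:P * 'X + c0%:P) = 3.
Proof.
rewrite -addrA size_polyDl size_polyXn //.
rewrite size_MXaddC; case: ifP => // _.
by rewrite size_polyC; case: (c1 != 0).
Qed.

Lemma quad_monic (c1 c0 : F) : ('X^2 + c1%:P * 'X + c0%:P) \is monic.
Proof. by rewrite monicE /lead_coef quad_size /= !coefE /= mulr0 !addr0. Qed.

Lemma quad_root (c1 c0 r : F) :
  root ('X^2 + c1%:P * 'X + c0%:P) r = (r * r + c1 * r + c0 == 0).
Proof. by rewrite /root !hornerE expr2. Qed.

Lemma XsubC_sqr (a : F) : ('X - a%:P) ^+ 2 = 'X^2 + (- (a + a))%:P * 'X + (a * a)%:P.
Proof. rewrite polyCN polyCD polyCM; ring. Qed.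

Lemma irreducible_quad_noroot (c1 c0 r : F) :
  irreducible_poly ('X^2 + c1%:P * 'X + c0%:P) -> ~~ root ('X^2 + c1%:P * 'X + c0%:P) r.
Proof.
move=> [_ hirr]; apply/negP => /factor_theorem [g eq].
have := hirr ('X - r%:P); rewrite size_XsubC => /(_ isT).
rewrite eq dvdp_mull // => /(_ isT) /eqp_size.
by rewrite -eq size_XsubC quad_size.
Qed.

Lemma irreducible_quad_c0 (c1 c0 : F) :
  irreducible_poly ('X^2 + c1%:P * 'X + c0%:P) -> c0 != 0.
Proof.
move=> /(irreducible_quad_noroot 0); apply: contra => /eqP c00.
by rewrite quad_root c00 !mulr0 !addr0.
Qed.

Lemma minpoly_quad (a b c d c1 c0 : F) :
  mxminpoly (mx2 a b c d) = 'X^2 + c1%:P * 'X + c0%:P ->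
  [/\ a + d = - c1, a * d - b * c = c0 & nonscalar2 a b c d].
Proof.
set B := mx2 a b c d; set g := _ + _ + _ => eg.
have ch : char_poly B = g.
  apply/eqP; rewrite -eqp_monic ?char_poly_monic ?quad_monic //.
  rewrite eqp_sym -eg -dvdp_size_eqp ?mxminpoly_dvd_char //.
  by rewrite eg quad_size size_char_poly.
split.
- have := char_poly_trace B (isT : (0 < 2)%N).
  by rewrite ch !coefE /= mulr1 add0r addr0 mx2_tr => ->; rewrite opprK.
- have := char_poly_det B; rewrite ch !coefE /= mulr0 !add0r mx2_det.
  by rewrite expr2 mulrNN !mul1r.
- move=> [c0' b0 ad]; have : mxminpoly B %| 'X - a%:P.
    apply: mxminpoly_min; rewrite rmorphB /= horner_mx_X horner_mx_C.
    by rewrite /B c0' b0 -ad mx2_scalar subrr.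
  move/dvdp_leq; rewrite polyXsubC_eq0 eg quad_size size_XsubC => /(_ isT).
  by [].
Qed.

(* If the minimal polynomial is a power of a quadratic, it is that quadratic
   (its degree is at least 1 and at most 2). *)
Lemma minpoly_power_quad (B : 'M[F]_2) (f : {poly F}) k :
  size f = 3 -> mxminpoly B = f ^+ k -> mxminpoly B = f.
Proof.
move=> sf e.
have le3 : (size (mxminpoly B) <= 3)%N.
  rewrite -(size_char_poly B); apply: dvdp_leq; last exact: mxminpoly_dvd_char.
  exact: monic_neq0 (char_poly_monic B).
have ge2 : (2 <= size (mxminpoly B))%N.
  by rewrite size_mxminpoly ltnS mxminpoly_nonconstant.
have sk := size_exp f k; rewrite -e sf /= in sk.
suff k1 : k = 1%N by rewrite e k1 expr1.
by move: le3 ge2 sk; case: (size (mxminpoly B)) => [|m] //= ? ? sk; lia.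
Qed.

Lemma similar_diag_of_eigen (x y z w u v : F) : nonscalar2 x y z w -> u != v ->
  u + v = x + w -> u * v = x * w - y * z -> similar (mx2 x y z w) (mx2 u 0 0 v).
Proof.
move=> ns nuv e1 e2; apply: similar_of_tr_det; first exact: nonscalar_cyclic2.
- constructor 3; rewrite unitfE (_ : _ - _ = v - u); last by ring.
  by rewrite subr_eq0 eq_sym.
- by rewrite e1.
- by rewrite -e2; ring.
Qed.

Lemma similar_jordan_of_eigen (x y z w r : F) : nonscalar2 x y z w ->
  r + r = x + w -> r * r = x * w - y * z -> similar (mx2 x y z w) (mx2 r 1 0 r).
Proof.
move=> ns e1 e2; apply: similar_of_tr_det; first exact: nonscalar_cyclic2.
- by constructor 2; exact: unitr1.
- by rewrite -e1.
- by rewrite -e2; ring.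
Qed.

Lemma similar_companion_noroot (x y z w : F) :
  nonscalar2 x y z w -> (forall r, r * r - (x + w) * r + (x * w - y * z) != 0) ->
  irreducible_poly ('X^2 + (- (x + w))%:P * 'X + (x * w - y * z)%:P) /\
  similar (mx2 x y z w) (mx2 0 1 (- (x * w - y * z)) (- - (x + w))).
Proof.
move=> ns nr; split.
  apply: cubic_irreducible; first by rewrite quad_size.
  by move=> r; rewrite quad_root mulNr -[_ + _ + _]/(_ - _ + _) nr.
apply: similar_of_tr_det; first exact: nonscalar_cyclic2.
- by constructor 2; exact: unitr1.
- by ring.
- by ring.
Qed.

Lemma diag_not_similar_jordan (al de be : F) :
  ~ similar (mx2 al 0 0 de) (mx2 be 1 0 be).
Proof.
move=> h; have [e1 e2] := similar_mx2_tr_det h.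
have : (al - de) * (al - de) = 0.
  rewrite (_ : _ * _ = (al + de) * (al + de) - 4%:R * (al * de - 0 * 0)); last by ring.
  rewrite e1 e2; ring.
move/eqP; rewrite mulf_eq0 orbb subr_eq0 => /eqP e.
move: h; rewrite e -mx2_scalar => /similar_scalar; rewrite mx2_scalar => ej.
by have [_ /eqP] := mx2_inj ej; rewrite oner_eq0.
Qed.

(* A triangular matrix has an eigenvalue, the companion matrix of an
   irreducible quadratic has none. *)
Lemma triangular_not_similar_companion (al t de b0 b1 : F) :
  irreducible_poly ('X^2 + b1%:P * 'X + b0%:P) ->
  ~ similar (mx2 al t 0 de) (mx2 0 1 (- b0) (- b1)).
Proof.
move=> hi /similar_mx2_tr_det [e1 e2]; have := irreducible_quad_noroot al hi.
rewrite quad_root (_ : _ + _ + _ = al * al - (0 + - b1) * al + (0 * - b1 - 1 * - b0));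
  last by ring.
by rewrite -e1 -e2 => /eqP; apply; ring.
Qed.

Lemma jordan_similar_eq (be be' : F) :
  similar (mx2 be 1 0 be) (mx2 be' 1 0 be') -> be = be'.
Proof.
move=> /similar_mx2_tr_det [e1 e2].
have : (be - be') * (be - be') = 0.
  rewrite (_ : _ * _ = (be * be - 1 * 0) - (be + be) * be' + be' * be'); last by ring.
  rewrite e1 e2; ring.
by move/eqP; rewrite mulf_eq0 orbb subr_eq0 => /eqP.
Qed.

Lemma companion_similar_eq (b0 b1 b0' b1' : F) :
  similar (mx2 0 1 (- b0) (- b1)) (mx2 0 1 (- b0') (- b1')) ->
  mx2 0 1 (- b0) (- b1) = mx2 0 1 (- b0') (- b1').
Proof.
move=> /similar_mx2_tr_det [e1 e2].
have -> : b1 = b1' by apply: oppr_inj; rewrite -(add0r (- b1)) e1 add0r.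
suff -> : b0 = b0' by [].
by rewrite (_ : b0 = 0 * - b1 - 1 * - b0); [rewrite e2; ring | ring].
Qed.

End FieldFacts.

Section ModP.
Variable p : nat.
Hypothesis pr_p : prime p.
Local Notation R := ('Z_(p ^ 2)).
Local Notation F := ('F_p).

Definition red (x : R) : F := (nat_of_ord x)%:R.
Definition liftF (x : F) : R := (nat_of_ord x)%:R.
Definition pquot (y : R) : F := ((nat_of_ord y) %/ p)%N%:R.

Lemma p2_gt1 : (1 < p ^ 2)%N.
Proof.
have p1 := prime_gt1 pr_p; rewrite (ltn_trans p1) // expnS expn1 ltn_Pmulr //.
exact: ltnW.
Qed.

Lemma eqR_nat (m n : nat) : ((m%:R : R) == n%:R) = (m == n %[mod p ^ 2]).
Proof.
apply/eqP/eqP => [e|e].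
  by have := congr1 (fun z : R => nat_of_ord z) e; rewrite /= !val_Zp_nat // p2_gt1.
by apply: val_inj; rewrite /= !val_Zp_nat ?p2_gt1.
Qed.

Lemma eqF_nat (m n : nat) : ((m%:R : F) == n%:R) = (m == n %[mod p]).
Proof.
apply/eqP/eqP => [e|e].
  by have := congr1 (fun z : F => nat_of_ord z) e; rewrite /= !val_Fp_nat.
by apply: val_inj; rewrite /= !val_Fp_nat.
Qed.

Lemma valF_lt (x : F) : (nat_of_ord x < p)%N.
Proof. by have := ltn_ord x; rewrite [X in (_ < X)%N](Fp_cast pr_p). Qed.

Lemma natF_inj_small (m n : nat) : (m < p)%N -> (n < p)%N -> (m%:R : F) = n%:R -> m = n.
Proof. by move=> hm hn /eqP; rewrite eqF_nat !modn_small // => /eqP. Qed.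

Lemma red_nat n : red n%:R = n%:R.
Proof.
by apply/eqP; rewrite /red eqF_nat val_Zp_nat ?p2_gt1 // modn_dvdm // dvdn_exp.
Qed.

Lemma redD x y : red (x + y) = red x + red y.
Proof.
have -> : x + y = (nat_of_ord x + nat_of_ord y)%N%:R by rewrite natrD !natr_Zp.
by rewrite red_nat natrD.
Qed.

Lemma redM x y : red (x * y) = red x * red y.
Proof.
have -> : x * y = (nat_of_ord x * nat_of_ord y)%N%:R by rewrite natrM !natr_Zp.
by rewrite red_nat natrM.
Qed.

Lemma red1 : red 1 = 1. Proof. exact: (red_nat 1). Qed.

Lemma redN x : red (- x) = - red x.
Proof. by apply/eqP; rewrite -subr_eq0 opprK -redD addNr (red_nat 0). Qed.

Lemma redB x y : red (x - y) = red x - red y.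
Proof. by rewrite redD redN. Qed.

Lemma red_liftF (x : F) : red (liftF x) = x.
Proof. by rewrite /liftF red_nat natr_Zp. Qed.

Lemma pmul_nat n : pmul (n%:R : F) = (p * n)%N%:R.
Proof.
by apply/eqP; rewrite /pmul eqR_nat val_Fp_nat // muln_modr mulnn modn_mod.
Qed.

Lemma pmulD (x y : F) : pmul (x + y) = pmul x + pmul y.
Proof. by rewrite -[x]natr_Zp -[y]natr_Zp -natrD !pmul_nat -natrD mulnDr. Qed.

Lemma pmul0 : pmul (0 : F) = 0.
Proof. by rewrite -(natr_Zp 0) pmul_nat /= muln0. Qed.

Lemma pmulN (x : F) : pmul (- x) = - pmul x.
Proof. by apply/eqP; rewrite -subr_eq0 opprK -pmulD addNr pmul0. Qed.

Lemma pmulM (x : F) (y : R) : pmul x * y = pmul (x * red y).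
Proof.
by rewrite -[y]natr_Zp red_nat -[x]natr_Zp -natrM !pmul_nat -natrM mulnA.
Qed.

Lemma pmulMl (x : F) (y : R) : y * pmul x = pmul (red y * x).
Proof. by rewrite mulrC pmulM mulrC. Qed.

Lemma pmul_inj : injective (@pmul p).
Proof.
move=> x y /eqP; rewrite /pmul eqR_nat expnS expn1 -!muln_modr.
rewrite eqn_pmul2l ?prime_gt0 // !modn_small ?valF_lt // => /eqP; exact: val_inj.
Qed.

Lemma red_pmul (x : F) : red (pmul x) = 0.
Proof. by rewrite /pmul red_nat natrM pchar_Fp_0 // mul0r. Qed.

Lemma pmul_pquot y : red y = 0 -> y = pmul (pquot y).
Proof.
move=> /eqP; rewrite /red -(natr_Zp 0) eqF_nat mod0n => /eqP hy.
by rewrite /pquot pmul_nat mulnC divnK ?natr_Zp // /dvdn hy.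
Qed.

Lemma unit_red x : red x != 0 -> x \is a GRing.unit.
Proof.
rewrite -[x]natr_Zp unitZpE ?p2_gt1 // coprime_pexpl // prime_coprime // red_nat.
by rewrite (dvdn_pcharf (pchar_Fp pr_p)).
Qed.

Lemma red_unit x : x \is a GRing.unit -> red x != 0.
Proof.
move=> u; apply/eqP => h; have := congr1 red (mulrV u).
by rewrite redM h mul0r red1 => /eqP; rewrite eq_sym oner_eq0.
Qed.

Lemma redmx2 (a b c d : R) : redmx (mx2 a b c d) = mx2 (red a) (red b) (red c) (red d).
Proof. exact: mx2_map. Qed.

Lemma cyclic2_of_red (a b c d : R) : nonscalar2 (red a) (red b) (red c) (red d) ->
  cyclic2 a b c d.
Proof.
move/nonscalar_cyclic2; rewrite /cyclic2 !unitfE.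
by case=> h; [constructor 1|constructor 2|constructor 3]; rewrite unit_red // !redB redD.
Qed.

Lemma red_minpoly_quad (x y z w : R) (c1 c0 : F) :
  mxminpoly (redmx (mx2 x y z w)) = 'X^2 + c1%:P * 'X + c0%:P ->
  [/\ red (x + w) = - c1, red (x * w - y * z) = c0 & cyclic2 x y z w].
Proof.
rewrite redmx2 => /minpoly_quad [tr det ns].
by split; [rewrite redD | rewrite redB !redM | exact: cyclic2_of_red].
Qed.

Lemma normal_form_f2 (a : F) (b : nat) : (b%:R : F) = a ->
  forall A : 'M[R]_2, GL_f2 a A -> exists! N : 'M[R]_2, NF_ii b N /\ GLconj A N.
Proof.
move=> hb A [_ hm]; rewrite (mx2E A) in hm *.
move: (A 0 0) (A 0 1) (A 1 0) (A 1 1) hm => x y z w.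
rewrite XsubC_sqr => /red_minpoly_quad [tr det cyc]; rewrite opprK in tr.
set bR := (b%:R : R); have rb : red bR = a by rewrite red_nat.
have NFE al ga : mx2 bR 1 0 bR + mx2 (pmul al) 0 (pmul ga) 0 =
    mx2 (bR + pmul al) 1 (pmul ga) bR.
  by rewrite mx2_add addr0 add0r addr0.
(* the trace fixes alpha, then the determinant fixes gamma *)
set al := pquot (x + w - (bR + bR)).
have hal : x + w - (bR + bR) = pmul al.
  by apply: pmul_pquot; rewrite redB tr redD rb subrr.
set et := pquot (x * w - y * z - bR * bR - pmul al * bR).
have het : x * w - y * z - bR * bR - pmul al * bR = pmul et.
  by apply: pmul_pquot; rewrite 2!redB det !redM red_pmul rb mul0r subr0 subrr.
exists (mx2 bR 1 0 bR + mx2 (pmul al) 0 (pmul (- et)) 0); split.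
  split; first by exists al, (- et).
  apply/GLconjE; rewrite NFE; apply: similar_of_tr_det => //.
  - by constructor 2; exact: unitr1.
  - by apply: (eq_of_sub_eq hal); ring.
  - by rewrite pmulN -het; ring.
move=> N [[al' [ga' ->]] /GLconjE]; rewrite -/bR !NFE => /similar_mx2_tr_det [e1 e2].
have eal : al' = al by apply: pmul_inj; rewrite -hal e1; ring.
by rewrite eal in e2 *; congr mx2; rewrite pmulN -het e2; ring.
Qed.

Lemma normal_form_f_irreducible (a0 a1 : F) (b0 b1 : nat) :
  irreducible_poly ('X^2 + a1%:P * 'X + a0%:P) ->
  (b0%:R : F) = a0 -> (b1%:R : F) = a1 ->
  forall A : 'M[R]_2, GL_f ('X^2 + a1%:P * 'X + a0%:P) A ->
    exists! N : 'M[R]_2, NF_iii b0 b1 N /\ GLconj A N.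
Proof.
move=> hirr hb0 hb1 A [_ [k /(minpoly_power_quad (quad_size _ _)) hm]].
have a0n := irreducible_quad_c0 hirr.
rewrite (mx2E A) in hm *; move: (A 0 0) (A 0 1) (A 1 0) (A 1 1) hm => x y z w.
move=> /red_minpoly_quad [tr det cyc].
set B0 := (b0%:R : R); set B1 := (b1%:R : R).
have rb0 : red B0 = a0 by rewrite red_nat.
have rb1 : red B1 = a1 by rewrite red_nat.
have NFE al be : mx2 0 1 (- B0) (- B1) + mx2 (pmul al) (pmul be) 0 0 =
    mx2 (pmul al) (1 + pmul be) (- B0) (- B1).
  by rewrite mx2_add !addr0 add0r addrC.
(* p beta enters the determinant as p (beta a0), and a0 is invertible mod p *)
have pmulB0 be : pmul be * B0 = pmul (be * a0) by rewrite pmulM rb0.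
set al := pquot (x + w + B1).
have hal : x + w + B1 = pmul al by apply: pmul_pquot; rewrite redD tr rb1 addNr.
set et := pquot (x * w - y * z - B0 + B1 * pmul al).
have het : x * w - y * z - B0 + B1 * pmul al = pmul et.
  by apply: pmul_pquot; rewrite redD redB det !redM red_pmul rb0 mulr0 addr0 subrr.
exists (mx2 0 1 (- B0) (- B1) + mx2 (pmul al) (pmul (et / a0)) 0 0); split.
  split; first by exists al, (et / a0).
  apply/GLconjE; rewrite NFE; apply: similar_of_tr_det => //.
  - constructor 2; apply: unit_red; rewrite redD red1 red_pmul addr0; exact: oner_neq0.
  - by apply: (eq_of_sub_eq hal); ring.
  - have e : pmul (et / a0) * B0 = pmul et by rewrite pmulB0 divfK.
    by apply: (eq_of_sub_eq (esym e)); rewrite -het; ring.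
move=> N [[al' [be' ->]] /GLconjE]; rewrite -/B0 -/B1 !NFE.
move=> /similar_mx2_tr_det [e1 e2].
have eal : al' = al by apply: pmul_inj; rewrite -hal e1; ring.
rewrite eal in e2 *; congr mx2; congr (_ + _).
have : pmul (be' * a0) = pmul et by rewrite -pmulB0 -het e2; ring.
by move/pmul_inj => <-; rewrite mulfK.
Qed.

(* Part (i).  The reduction is aI, so A = bI + pB; the normal forms are bI + pC
   with C in the following normal forms over Z_p. *)
Definition NFmodp (C : 'M[F]_2) : Prop :=
  (exists al de : nat, (al <= de)%N /\ (de < p)%N /\ C = mx2 al%:R 0 0 de%:R)
  \/ (exists al : F, C = mx2 al 1 0 al)
  \/ (exists b0 b1 : F, irreducible_poly ('X^2 + b1%:P * 'X + b0%:P) /\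
        C = mx2 0 1 (- b0) (- b1)).

Definition pmx (C : 'M[F]_2) : 'M[R]_2 := map_mx (@pmul p) C.

Lemma NF_iE (b : nat) (N : 'M[R]_2) :
  NF_i b N <-> exists2 C, NFmodp C & N = (b%:R)%:M + pmx C.
Proof.
rewrite /pmx; split.
  case=> [[al [de [h1 [h2 ->]]]]|[[al ->]|[b0 [b1 [hi ->]]]]].
  - exists (mx2 al%:R 0 0 de%:R); first by left; exists al, de.
    by rewrite mx2_map !pmul_nat pmul0.
  - exists (mx2 al 1 0 al); first by right; left; exists al.
    by rewrite mx2_map pmul0.
  - exists (mx2 0 1 (- b0) (- b1)); first by right; right; exists b0, b1.
    by rewrite mx2_map pmul0.
move=> [C [[al [de [h1 [h2 ->]]]]|[[al ->]|[b0 [b1 [hi ->]]]]] ->].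
- by left; exists al, de; rewrite mx2_map !pmul_nat pmul0.
- by right; left; exists al; rewrite mx2_map pmul0.
- by right; right; exists b0, b1; rewrite mx2_map pmul0.
Qed.

(* pC ~ pC' over Z_{p^2} iff C ~ C' over Z_p: a conjugator Q mod p lifts to
   any integer representative, and a conjugator P over Z_{p^2} only acts
   on pC through its reduction. *)
Lemma similar_pmx_of_modp (c0 c1 c2 c3 d0 d1 d2 d3 : F) :
  similar (mx2 c0 c1 c2 c3) (mx2 d0 d1 d2 d3) ->
  similar (mx2 (pmul c0) (pmul c1) (pmul c2) (pmul c3))
          (mx2 (pmul d0) (pmul d1) (pmul d2) (pmul d3)).
Proof.
move=> [Q [uQ e]]; rewrite (mx2E Q) in uQ e.
move: uQ e; rewrite unitmxE mx2_det unitfE !mx2_mul => uQ e.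
have [e0 e1 e2 e3] := mx2_inj e.
exists (mx2 (liftF (Q 0 0)) (liftF (Q 0 1)) (liftF (Q 1 0)) (liftF (Q 1 1))); split.
  by rewrite unitmxE mx2_det; apply: unit_red; rewrite redB !redM !red_liftF.
by rewrite !mx2_mul !pmulM !pmulMl !red_liftF -!pmulD e0 e1 e2 e3.
Qed.

Lemma similar_modp_of_pmx (c0 c1 c2 c3 d0 d1 d2 d3 : F) :
  similar (mx2 (pmul c0) (pmul c1) (pmul c2) (pmul c3))
          (mx2 (pmul d0) (pmul d1) (pmul d2) (pmul d3)) ->
  similar (mx2 c0 c1 c2 c3) (mx2 d0 d1 d2 d3).
Proof.
move=> [P [uP e]]; rewrite (mx2E P) in uP e.
move: uP e; rewrite unitmxE mx2_det !mx2_mul !pmulM !pmulMl -!pmulD => uP.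
move=> e; have [/pmul_inj e0 /pmul_inj e1 /pmul_inj e2 /pmul_inj e3] := mx2_inj e.
exists (mx2 (red (P 0 0)) (red (P 0 1)) (red (P 1 0)) (red (P 1 1))); split.
  by rewrite unitmxE mx2_det unitfE -!redM -redB; apply: red_unit.
by rewrite !mx2_mul e0 e1 e2 e3.
Qed.

Lemma similar_pmx (C C' : 'M[F]_2) : similar C C' <-> similar (pmx C) (pmx C').
Proof.
rewrite (mx2E C) (mx2E C') /pmx !mx2_map.
by split; [exact: similar_pmx_of_modp | exact: similar_modp_of_pmx].
Qed.

Lemma classify_modp (B : 'M[F]_2) : exists2 C, NFmodp C & similar B C.
Proof.
rewrite (mx2E B); move: (B 0 0) (B 0 1) (B 1 0) (B 1 1) => x y z w.
have [/and3P[/eqP-> /eqP-> /eqP->]|sc] := boolP [&& z == 0, y == 0 & x == w].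
  exists (mx2 w 0 0 w); last exact: similar_refl.
  by left; exists (nat_of_ord w), (nat_of_ord w); rewrite natr_Zp leqnn valF_lt.
have ns : nonscalar2 x y z w by case=> ez ey exw; move: sc; rewrite ez ey exw !eqxx.
have [/existsP [r /eqP hr]|nr] :=
  boolP [exists r : F, r * r - (x + w) * r + (x * w - y * z) == 0]; last first.
  have noroot r : r * r - (x + w) * r + (x * w - y * z) != 0.
    by apply: contra nr => h; apply/existsP; exists r.
  have [irr sim] := similar_companion_noroot ns noroot.
  by eexists; last exact: sim; right; right; exists (x * w - y * z), (- (x + w)).
have [s es ed] : exists2 s, r + s = x + w & r * s = x * w - y * z.
  by exists (x + w - r); [ring | apply/esym/(eq_of_sub_eq hr); ring].
clear hr.
wlog le : r s es ed / (nat_of_ord r <= nat_of_ord s)%N.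
  move=> gen; have [le|lt] := leqP r s; first exact: gen r s es ed le.
  by apply: (gen s r); [rewrite addrC | rewrite mulrC | exact: ltnW].
have [ers|nrs] := eqVneq r s.
  rewrite -ers in es ed.
  exists (mx2 r 1 0 r); first by right; left; exists r.
  exact: similar_jordan_of_eigen.
exists (mx2 r 0 0 s); last exact: similar_diag_of_eigen.
by left; exists (nat_of_ord r), (nat_of_ord s); rewrite !natr_Zp le valF_lt.
Qed.

(* Diagonal normal forms: equal trace and determinant give the same multiset
   of eigenvalues, and the integer ordering selects one representative. *)
Lemma diag_similar_eq (al de al' de' : nat) :
  (al <= de)%N -> (de < p)%N -> (al' <= de')%N -> (de' < p)%N ->
  similar (mx2 (al%:R : F) 0 0 de%:R) (mx2 al'%:R 0 0 de'%:R) ->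
  mx2 (al%:R : F) 0 0 de%:R = mx2 al'%:R 0 0 de'%:R.
Proof.
move=> h1 h2 h1' h2' /similar_mx2_tr_det [e1 e2].
have : ((al%:R : F) - al'%:R) * (al%:R - de'%:R) = 0.
  rewrite (_ : _ * _ = al%:R * al%:R - al%:R * (al'%:R + de'%:R) + (al'%:R * de'%:R - 0 * 0));
    last by ring.
  by rewrite -e1 -e2; ring.
have lal : (al < p)%N by apply: leq_ltn_trans h2.
have lal' : (al' < p)%N by apply: leq_ltn_trans h2'.
move/eqP; rewrite mulf_eq0 !subr_eq0 => /orP [] /eqP e.
  have e' : (de%:R : F) = de'%:R by apply: (@addrI _ al%:R); rewrite e1 e.
  by rewrite (natF_inj_small lal lal' e) (natF_inj_small h2 h2' e').
have e' : (de%:R : F) = al'%:R by apply: (@addrI _ al%:R); rewrite e1 e addrC.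
have E1 := natF_inj_small lal h2' e; have E2 := natF_inj_small h2 lal' e'.
have -> : al = al' by lia.
by have -> : de = de' by lia.
Qed.

Lemma NFmodp_uniq (C C' : 'M[F]_2) : NFmodp C -> NFmodp C' -> similar C C' -> C = C'.
Proof.
case=> [[al [de [h1 [h2 ->]]]]|[[be ->]|[b0 [b1 [hi ->]]]]];
case=> [[al' [de' [h1' [h2' ->]]]]|[[be' ->]|[b0' [b1' [hi' ->]]]]] h.
- exact: diag_similar_eq.
- by case: (diag_not_similar_jordan h).
- by case: (triangular_not_similar_companion hi' h).
- by case: (diag_not_similar_jordan (similar_sym h)).
- by rewrite (jordan_similar_eq h).
- by case: (triangular_not_similar_companion hi' h).
- by case: (triangular_not_similar_companion hi (similar_sym h)).
- by case: (triangular_not_similar_companion hi (similar_sym h)).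
- exact: companion_similar_eq.
Qed.

Lemma lift_mod_p (A S : 'M[R]_2) : redmx A = redmx S -> A = S + pmx (map_mx pquot (A - S)).
Proof.
move=> eAS; apply/matrixP => i j; rewrite [in RHS]mxE /pmx mxE mxE.
rewrite -pmul_pquot; first by rewrite !mxE addrC subrK.
rewrite 2!mxE redB; have := congr1 (fun M : 'M[F]_2 => M i j) eAS.
by rewrite /redmx !mxE => e; rewrite /red e subrr.
Qed.

Lemma redmx_scalar_nat (b : nat) : redmx ((b%:R : R)%:M) = (b%:R : F)%:M.
Proof.
apply/matrixP => i j; rewrite !mxE; case: (i == j); rewrite ?mulr0n // mulr1n.
exact: red_nat.
Qed.

Lemma normal_form_f11 (a : F) (b : nat) : (b%:R : F) = a ->
  forall A : 'M[R]_2, GL_f11 a A -> exists! N : 'M[R]_2, NF_i b N /\ GLconj A N.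
Proof.
move=> hb A [_ hm]; set bR := (b%:R : R).
have [B eA] : exists B, A = bR%:M + pmx B.
  by exists (map_mx pquot (A - bR%:M)); apply: lift_mod_p; rewrite hm redmx_scalar_nat hb.
have [C hC hBC] := classify_modp B.
have hAC : similar A (bR%:M + pmx C).
  by rewrite eA; apply: similar_shift; apply/similar_pmx.
exists (bR%:M + pmx C); split.
  by split; [apply/NF_iE; exists C | apply/GLconjE].
move=> N [/NF_iE [C' hC' ->] /GLconjE hAN].
have /similar_unshift/similar_pmx hCC' := similar_trans (similar_sym hAC) hAN.
by rewrite (NFmodp_uniq hC hC' hCC').
Qed.

End ModP.

Theorem theorem3p2 (p : nat) (pr_p : prime p) :
  (* (i) *)
  (forall (a : 'F_p) (b : nat), a != 0 -> (0 < b < p)%N -> (b%:R : 'F_p) = a ->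
     forall A : 'M['Z_(p ^ 2)]_2, GL_f11 a A ->
       exists! N : 'M['Z_(p ^ 2)]_2, NF_i b N /\ GLconj A N)
  /\
  (* (ii) *)
  (forall (a : 'F_p) (b : nat), a != 0 -> (0 < b < p)%N -> (b%:R : 'F_p) = a ->
     forall A : 'M['Z_(p ^ 2)]_2, GL_f2 a A ->
       exists! N : 'M['Z_(p ^ 2)]_2, NF_ii b N /\ GLconj A N)
  /\
  (* (iii) *)
  (forall (a0 a1 : 'F_p) (b0 b1 : nat),
     irreducible_poly ('X^2 + a1%:P * 'X + a0%:P) ->
     (b0 < p)%N -> (b1 < p)%N -> (b0%:R : 'F_p) = a0 -> (b1%:R : 'F_p) = a1 ->
     forall A : 'M['Z_(p ^ 2)]_2, GL_f ('X^2 + a1%:P * 'X + a0%:P) A ->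
       exists! N : 'M['Z_(p ^ 2)]_2, NF_iii b0 b1 N /\ GLconj A N).
Proof.
split; first by move=> a b _ _; exact: normal_form_f11.
split; first by move=> a b _ _; exact: normal_form_f2.
by move=> a0 a1 b0 b1 hirr _ _; exact: normal_form_f_irreducible.
Qed.
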